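(* Let $\eta>0$, $T>0$, $\beta\in[0,+\infty]$, $\theta>0$, $v>0$. Let $u$ be any real number if $\beta=+\infty$ and $u=-v\beta$ otherwise. Write $\omega=W(\theta v\eta^2T)$ and define $k_\beta:\mathbb R\to\mathbb R$ by $$k_\beta(z)=\theta\left(u+ve^{\eta\sqrt Tz}\right)1_{z\le\frac{\ln\beta}{\eta\sqrt T}}+\frac{z^2}{2}$$ (conventions $\ln(+\infty)=+\infty$, $\ln0=-\infty$), and $$m(\beta)=\begin{cases}-\frac{\omega}{\eta\sqrt T}&\text{if }\beta\in\left[\frac1{\theta v}\left(\frac{\omega}{\eta^2T}+\frac{\omega^2}{2\eta^2T}\right),+\infty\right],\\0&\text{otherwise.}\end{cases}$$ Then $k_\beta$ attains its minimum value at $m(\beta)$. Moreover, if $\beta<+\infty$, $$k_\beta(m(\beta))=-\left(\theta v\beta-\frac{\omega}{\eta^2T}-\frac{\omega^2}{2\eta^2T}\right)_+,$$ and $$k_{+\infty}(m(+\infty))=\frac{\omega}{\eta^2T}+\frac{\omega^2}{2\eta^2T}+\theta u.$$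
   Context: The Lambert function $W$ is the inverse of the bijection $x\in(-1,+\infty)\mapsto xe^x\in(-1/e,+\infty)$; $x_+=\max(x,0)$. *)

From Stdlib Require Import Reals Lra ClassicalEpsilon.
From Coquelicot Require Import Coquelicot.
Open Scope R_scope.

(* Lambert W: inverse of x in [-1,+oo) |-> x e^x, onto [-1/e,+oo).
   For y >= -1/e, LambertW y is the unique x >= -1 with x e^x = y
   (chosen by Hilbert's epsilon; unspecified outside the domain). *)
Definition LambertW (y : R) : R :=
  epsilon (inhabits 0) (fun x => -1 <= x /\ x * exp x = y).

(* indicator of { z <= ln beta / (eta sqrt T) }, with ln(+oo) = +oo, ln 0 = -oo *)
Definition ind_beta (eta T : R) (beta : Rbar) (z : R) : R :=
  match beta with
  | p_infty => 1
  | m_infty => 0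
  | Finite b =>
      if Rlt_dec 0 b then (if Rle_dec z (ln b / (eta * sqrt T)) then 1 else 0)
      else 0
  end.

Definition k_beta (eta T theta u v : R) (beta : Rbar) (z : R) : R :=
  theta * (u + v * exp (eta * sqrt T * z)) * ind_beta eta T beta z + z ^ 2 / 2.

Definition m_beta (eta T theta v : R) (beta : Rbar) : R :=
  let w := LambertW (theta * v * eta ^ 2 * T) in
  if Rbar_le_dec (Finite (/ (theta * v) * (w / (eta ^ 2 * T) + w ^ 2 / (2 * eta ^ 2 * T)))) beta
  then - w / (eta * sqrt T) else 0.

From Stdlib Require Import Reals Lra ClassicalEpsilon.
From Coquelicot Require Import Coquelicot.
Open Scope R_scope.

(* Write c = eta sqrt T, a = theta v and w = W(a c^2), so that a e^(-w) = w/c^2.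
   Convexity of exp, e^(cz) >= e^(-w) (1 + cz + w), then gives
   a e^(cz) + z^2/2 >= K + (z + w/c)^2/2 with K = w/c^2 + w^2/(2c^2): the
   untruncated function has minimum K, attained at -w/c.  For finite
   beta = b the function k_beta is a e^(cz) - ab + z^2/2 below ln b / c and
   z^2/2 above, so its infimum is min(K - ab, 0).  If ab >= K, then
   e^(-w) <= b and -w/c lies in the lower region; otherwise b < K/a < 1, so
   ln b < 0 and 0 lies in the upper region.  For beta = +oo the indicator is
   identically 1 and k_beta is theta u plus the untruncated function. *)

Lemma LambertW_spec y :
  0 <= y -> -1 <= LambertW y /\ LambertW y * exp (LambertW y) = y.
Proof.
  intros Hy.
  apply (epsilon_spec (inhabits 0) (fun x => -1 <= x /\ x * exp x = y)).
  destruct Hy as [Hy | <-]; [|exists 0; split; [lra | ring]].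
  assert (Hcont : continuity (fun x => x * exp x - y)).
  { apply continuity_minus; [apply continuity_mult|apply continuity_const; now intros ? ?].
    - apply derivable_continuous, derivable_id.
    - apply derivable_continuous, derivable_exp. }
  destruct (IVT _ 0 y Hcont Hy) as [x [[Hx0 _] Hx]].
  - rewrite exp_0; lra.
  - assert (1 + y <= exp y) by apply exp_ineq1_le. nra.
  - exists x; split; lra.
Qed.

Lemma LambertW_pos y : 0 < y -> 0 < LambertW y.
Proof.
  intros Hy.
  destruct (LambertW_spec y (Rlt_le _ _ Hy)) as [_ Hw].
  pose proof (exp_pos (LambertW y)).
  destruct (Rle_lt_dec (LambertW y) 0); nra.
Qed.

Section ExpQuadratic.

Variables a c w : R.
Hypotheses (Hc : c <> 0) (Hw : 0 <= w) (Hwe : w * exp w = a * (c * c)).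

Lemma Lambert_exp_opp : a * exp (- w) = w / (c * c).
Proof.
  assert (Ha : a = w * exp w / (c * c)) by (rewrite Hwe; field; exact Hc).
  pose proof (exp_pos w).
  rewrite exp_Ropp, Ha.
  field; split; [exact Hc | lra].
Qed.

Lemma exp_quadratic_ge z :
  w / (c * c) + w ^ 2 / (2 * (c * c)) <= a * exp (c * z) + z ^ 2 / 2.
Proof.
  assert (Hsplit : exp (c * z) = exp (- w) * exp (c * z + w))
    by (rewrite <- exp_plus; f_equal; ring).
  assert (Hcvx : w / (c * c) * (1 + (c * z + w)) <= a * exp (- w) * exp (c * z + w)).
  { rewrite Lambert_exp_opp.
    apply Rmult_le_compat_l; [|apply exp_ineq1_le].
    apply Rdiv_le_0_compat; [lra | nra]. }
  assert (Hsq : w / (c * c) * (1 + (c * z + w)) + z ^ 2 / 2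
                = w / (c * c) + w ^ 2 / (2 * (c * c)) + (z + w / c) ^ 2 / 2)
    by (field; exact Hc).
  rewrite Hsplit.
  pose proof (pow2_ge_0 (z + w / c)).
  lra.
Qed.

Lemma exp_quadratic_at_min :
  a * exp (c * (- w / c)) + (- w / c) ^ 2 / 2 = w / (c * c) + w ^ 2 / (2 * (c * c)).
Proof.
  replace (c * (- w / c)) with (- w) by (field; exact Hc).
  rewrite Lambert_exp_opp.
  field; exact Hc.
Qed.

Lemma exp_quadratic_min_lt : 0 < w -> w / (c * c) + w ^ 2 / (2 * (c * c)) < a.
Proof.
  intros Hw0.
  assert (Hcc : 0 < c * c) by nra.
  apply (Rmult_lt_reg_r (c * c)); [exact Hcc|].
  replace ((w / (c * c) + w ^ 2 / (2 * (c * c))) * (c * c)) with (w + w ^ 2 / 2)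
    by (field; exact Hc).
  rewrite <- Hwe.
  assert (1 + w < exp w) by (apply exp_ineq1; lra).
  nra.
Qed.

End ExpQuadratic.

Section KBeta.

Variables eta T theta v : R.
Hypotheses (Heta : 0 < eta) (HT : 0 < T) (Htheta : 0 < theta) (Hv : 0 < v).

Local Notation c := (eta * sqrt T).
Local Notation w := (LambertW (theta * v * eta ^ 2 * T)).
Local Notation K := (w / (eta ^ 2 * T) + w ^ 2 / (2 * eta ^ 2 * T)).

Lemma eta_sqrt_pos : 0 < c.
Proof. apply Rmult_lt_0_compat; [exact Heta | apply sqrt_lt_R0, HT]. Qed.

Lemma eta2_T_sqr : eta ^ 2 * T = c * c.
Proof. rewrite <- (sqrt_sqrt T) at 1 by lra. ring. Qed.

Lemma w_pos : 0 < w.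
Proof. apply LambertW_pos; repeat apply Rmult_lt_0_compat; auto; nra. Qed.

Lemma w_spec : w * exp w = theta * v * (c * c).
Proof.
  destruct (LambertW_spec (theta * v * eta ^ 2 * T)) as [_ Hw].
  - pose proof w_pos; repeat apply Rmult_le_pos; nra.
  - rewrite Hw, <- eta2_T_sqr; ring.
Qed.

Lemma K_eq : K = w / (c * c) + w ^ 2 / (2 * (c * c)).
Proof.
  replace (2 * eta ^ 2 * T) with (2 * (eta ^ 2 * T)) by ring.
  now rewrite eta2_T_sqr.
Qed.

Lemma K_pos : 0 < K.
Proof.
  rewrite K_eq.
  pose proof w_pos; pose proof eta_sqrt_pos.
  apply Rplus_lt_0_compat; apply Rdiv_lt_0_compat; nra.
Qed.

Lemma K_le_exp_quadratic z : K <= theta * v * exp (c * z) + z ^ 2 / 2.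
Proof.
  pose proof eta_sqrt_pos; pose proof w_pos.
  rewrite K_eq; apply exp_quadratic_ge; [lra | lra | exact w_spec].
Qed.

Lemma K_lt : K < theta * v.
Proof.
  pose proof eta_sqrt_pos.
  rewrite K_eq; apply exp_quadratic_min_lt; [lra | exact w_spec | exact w_pos].
Qed.

Lemma exp_opp_w_le b : K <= theta * v * b -> exp (- w) <= b.
Proof.
  intros HK.
  pose proof eta_sqrt_pos.
  apply (Rmult_le_reg_l (theta * v)); [nra |].
  rewrite (Lambert_exp_opp (theta * v) c w); [| lra | exact w_spec].
  rewrite K_eq in HK.
  assert (0 <= w ^ 2 / (2 * (c * c))) by (apply Rdiv_le_0_compat; [apply pow2_ge_0 | nra]).
  lra.
Qed.

Lemma k_beta_p_infty u z :
  k_beta eta T theta u v p_infty z = theta * u + (theta * v * exp (c * z) + z ^ 2 / 2).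
Proof. unfold k_beta, ind_beta; ring. Qed.

Lemma k_beta_p_infty_ge u z : theta * u + K <= k_beta eta T theta u v p_infty z.
Proof. rewrite k_beta_p_infty; pose proof (K_le_exp_quadratic z); lra. Qed.

Lemma k_beta_p_infty_at_m u :
  k_beta eta T theta u v p_infty (m_beta eta T theta v p_infty) = theta * u + K.
Proof.
  unfold m_beta; cbv zeta.
  destruct (Rbar_le_dec _ _) as [_ | Hnot]; [|contradict Hnot; exact I].
  rewrite k_beta_p_infty, K_eq, exp_quadratic_at_min; [ring | |].
  - pose proof eta_sqrt_pos; lra.
  - exact w_spec.
Qed.

Lemma k_beta_finite_in b z : 0 < b -> z <= ln b / c ->
  k_beta eta T theta (- v * b) v (Finite b) z
  = theta * v * exp (c * z) + z ^ 2 / 2 - theta * v * b.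
Proof.
  intros Hb Hz; unfold k_beta, ind_beta.
  destruct (Rlt_dec 0 b); [destruct (Rle_dec z (ln b / c)) |]; [ring | contradiction ..].
Qed.

Lemma k_beta_finite_out b z : ~ (0 < b /\ z <= ln b / c) ->
  k_beta eta T theta (- v * b) v (Finite b) z = z ^ 2 / 2.
Proof.
  intros Hout; unfold k_beta, ind_beta.
  destruct (Rlt_dec 0 b); [destruct (Rle_dec z (ln b / c)); [tauto |] |]; ring.
Qed.

Lemma k_beta_finite_ge b z :
  - Rmax 0 (theta * v * b - K) <= k_beta eta T theta (- v * b) v (Finite b) z.
Proof.
  pose proof (Rmax_l 0 (theta * v * b - K)); pose proof (Rmax_r 0 (theta * v * b - K)).
  destruct (Rlt_dec 0 b) as [Hb | Hb]; [destruct (Rle_dec z (ln b / c)) as [Hz | Hz] |].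
  - rewrite k_beta_finite_in by assumption; pose proof (K_le_exp_quadratic z); lra.
  - rewrite k_beta_finite_out by tauto; pose proof (pow2_ge_0 z); lra.
  - rewrite k_beta_finite_out by tauto; pose proof (pow2_ge_0 z); lra.
Qed.

Lemma k_beta_finite_at_m b :
  k_beta eta T theta (- v * b) v (Finite b) (m_beta eta T theta v (Finite b))
  = - Rmax 0 (theta * v * b - K).
Proof.
  pose proof K_pos; pose proof K_lt; pose proof eta_sqrt_pos as Hc.
  assert (Ha : 0 < theta * v) by nra.
  unfold m_beta; cbv zeta.
  destruct (Rbar_le_dec _ _) as [Hge | Hlt].
  - cbn [Rbar_le] in Hge.
    assert (HK : K <= theta * v * b).
    { replace K with (theta * v * (/ (theta * v) * K)) by (field; lra).
      apply Rmult_le_compat_l; lra. }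
    pose proof (exp_opp_w_le b HK) as Hexp.
    assert (Hb : 0 < b) by (pose proof (exp_pos (- w)); lra).
    assert (Hm : - w / c <= ln b / c).
    { apply Rmult_le_compat_r; [left; apply Rinv_0_lt_compat; lra|].
      rewrite <- (ln_exp (- w)); apply ln_le; [apply exp_pos | exact Hexp]. }
    rewrite k_beta_finite_in, Rmax_right, K_eq, exp_quadratic_at_min
      by (lra || exact w_spec).
    ring.
  - cbn [Rbar_le] in Hlt.
    assert (HK : theta * v * b < K).
    { replace K with (theta * v * (/ (theta * v) * K)) by (field; lra).
      apply Rmult_lt_compat_l; [| apply Rnot_le_lt]; assumption. }
    assert (Hb1 : b < 1) by nra.
    assert (Hout : ~ (0 < b /\ 0 <= ln b / c)).
    { intros [Hb Hz].
      assert (ln b < 0) by (rewrite <- ln_1; apply ln_increasing; lra).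
      pose proof (Rinv_0_lt_compat c Hc).
      unfold Rdiv in Hz; nra. }
    rewrite k_beta_finite_out, Rmax_left by (assumption || lra).
    lra.
Qed.

End KBeta.

Theorem lemma4 (eta T theta v : R) (beta : Rbar) (u : R)
  (Heta : 0 < eta) (HT : 0 < T) (Htheta : 0 < theta) (Hv : 0 < v)
  (Hbeta : Rbar_le (Finite 0) beta)
  (Hu : forall b : R, beta = Finite b -> u = - v * b) :
  let w := LambertW (theta * v * eta ^ 2 * T) in
  let m := m_beta eta T theta v beta in
  (forall z : R, k_beta eta T theta u v beta m <= k_beta eta T theta u v beta z) /\
  (forall b : R, beta = Finite b ->
     k_beta eta T theta u v beta m =
       - Rmax 0 (theta * v * b - w / (eta ^ 2 * T) - w ^ 2 / (2 * eta ^ 2 * T))) /\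
  (beta = p_infty ->
     k_beta eta T theta u v beta m =
       w / (eta ^ 2 * T) + w ^ 2 / (2 * eta ^ 2 * T) + theta * u).
Proof.
  cbv zeta.
  destruct beta as [b | |]; [| | destruct Hbeta].
  - rewrite (Hu b eq_refl), k_beta_finite_at_m by assumption.
    split; [| split; [| discriminate]].
    + intro z; apply k_beta_finite_ge; assumption.
    + intros b' [= <-]; now rewrite Rminus_plus_distr.
  - rewrite k_beta_p_infty_at_m by assumption.
    split; [| split; [discriminate |]].
    + intro z; apply k_beta_p_infty_ge; assumption.
    + intros _; ring.
Qed.
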